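(* For every positive integer $\gamma$ there exists a tree $T$ with domination number $\gamma$ such that $\Gamma(T)>\frac{2}{5}\sqrt5^{\,\gamma}$.
   Context: For a graph $G$, a set $D\subseteq V(G)$ is dominating if every vertex of $G$ lies in $D$ or has a neighbour in $D$. The domination number $\gamma(G)$ is the minimum size of a dominating set; $\Gamma(G)$ denotes the number of dominating sets of $G$ of size $\gamma(G)$. *)

From mathcomp Require Import all_boot.
From Stdlib Require Import Reals.
Set Implicit Arguments. Unset Strict Implicit. Unset Printing Implicit Defensive.

Section Graphs.
Variable V : finType.

Definition simple_graph (e : rel V) : Prop :=
  symmetric e /\ irreflexive e.

Definition connected_graph (e : rel V) : Prop :=
  forall x y : V, connect e x y.

Definition has_cycle (e : rel V) : Prop :=
  exists (x : V) (p : seq V),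
    [/\ 2 <= size p, uniq (x :: p), path e x p & e (last x p) x].

Definition is_tree (e : rel V) : Prop :=
  [/\ 0 < #|V|, simple_graph e, connected_graph e & ~ has_cycle e].

Definition dominating (e : rel V) (D : {set V}) : bool :=
  [forall v, (v \in D) || [exists u in D, e v u]].

(* domination number: minimum size of a dominating set
   (V itself dominates, so #|V| is a valid initial value) *)
Definition domination_number (e : rel V) : nat :=
  \big[minn/#|V|]_(D : {set V} | dominating e D) #|D|.

Definition num_min_dominating (e : rel V) : nat :=
  #|[set D : {set V} | dominating e D & #|D| == domination_number e]|.
End Graphs.

(* A root with two pendant leaves carries k paths on five vertices, each hanging by an
   end, and, when t holds, a spider with three legs of length two hanging by the end of a
   leg.  The leaf, the second and fifth vertex of every path and three spider vertices
   have pairwise disjoint closed neighbourhoods, so gamma >= 1 + 2k + 3t; conversely the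
   root together with any of 5 two-vertex patterns on each path and any of 11 three-vertex
   patterns on the spider dominates, so gamma = 1 + 2k + 3t and Gamma >= 5^k 11^t.
   For gamma = 2k + 1 this is 5^k > (2/sqrt 5) 5^k, for gamma = 2k + 4 it is
   11 * 5^k > 10 * 5^k, and gamma = 2 is covered by the path on four vertices. *)

From mathcomp Require Import all_boot zify.
From Stdlib Require Import Reals Lra Psatz.
Set Implicit Arguments. Unset Strict Implicit. Unset Printing Implicit Defensive.

Lemma cycle_rot_to (V : eqType) (e : rel V) (x m : V) (p : seq V) :
    m \in x :: p -> path e x p -> e (last x p) x ->
  exists q, [/\ perm_eq (m :: q) (x :: p), path e m q & e (last m q) m].
Proof.
move=> m_in path_p last_x.
have [i q rot_i] := rot_to m_in.
have : cycle e (m :: q) by rewrite -rot_i rot_cycle /= rcons_path path_p last_x.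
rewrite /= rcons_path => /andP [path_q last_m].
by exists q; rewrite -rot_i perm_rot.
Qed.

Definition parent_edge (par : nat -> nat) (x y : nat) : bool :=
  ((x == par y) && (0 < y)) || ((y == par x) && (0 < x)).

Definition parent_rel (n : nat) (par : nat -> nat) : rel 'I_n :=
  fun x y => parent_edge par x y.
Arguments parent_rel : clear implicits.

Section ParentTree.
Variables (n : nat) (par : nat -> nat).
Hypothesis par_lt : forall v, 0 < v -> par v < v.

Local Notation e := (parent_rel n par).

Lemma parent_rel_sym : symmetric e.
Proof. by move=> x y; rewrite /parent_rel /parent_edge orbC. Qed.

Lemma parent_rel_irr : irreflexive e.
Proof.
move=> x; rewrite /parent_rel /parent_edge orbb; apply/negP => /andP [/eqP x_par x_gt0].
by have := par_lt x_gt0; rewrite -x_par ltnn.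
Qed.

Lemma parent_rel_lt (x y : 'I_n) : e x y -> y < x -> y = par x :> nat.
Proof.
case/orP => /andP [/eqP -> y_gt0] // /[dup] + /leq_trans /(_ (ltnW (par_lt y_gt0))).
by rewrite ltnn.
Qed.

Lemma connect_parent_root (n_gt0 : 0 < n) (x : 'I_n) : connect e x (Ordinal n_gt0).
Proof.
elim/ltn_ind: (nat_of_ord x) {-2}x (erefl (nat_of_ord x)) => m IH y y_m.
have [y0|y_gt0] := posnP y.
  by rewrite (_ : y = Ordinal n_gt0) //; apply: ord_inj.
have par_n : par y < n by apply: ltn_trans (par_lt y_gt0) (ltn_ord y).
apply: (connect_trans (y := Ordinal par_n)).
  by apply: connect1; rewrite /parent_rel /parent_edge /= eqxx y_gt0 orbT.
by apply: (IH (par y)) => //; rewrite -y_m par_lt.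
Qed.

(* The largest vertex m of a cycle has two distinct cycle neighbours below m, but
   its only neighbour below m is its parent. *)
Lemma parent_rel_acyclic : ~ has_cycle e.
Proof.
move=> [x [p [size_p uniq_p path_p last_x]]].
have x_in : x \in x :: p by rewrite inE eqxx.
have [m m_in m_max] := arg_maxnP (fun y : 'I_n => nat_of_ord y) x_in.
have [[|u [|v q]] [perm_q path_q last_m]] := cycle_rot_to m_in path_p last_x;
  try by move: (perm_size perm_q) size_p => /= [<-].
have uniq_q : uniq [:: m, u, v & q] by rewrite (perm_uniq perm_q).
have below z : z \in [:: u, v & q] -> e m z -> z = par m :> nat.
  move=> z_in e_mz; apply: parent_rel_lt e_mz _.
  have z_xp : z \in x :: p by rewrite -(perm_mem perm_q) inE z_in orbT.
  have z_le_m : z <= m := m_max z z_xp.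
  rewrite ltn_neqAle z_le_m andbT.
  by apply: contraTneq uniq_q => /val_inj <-; rewrite /= z_in.
have e_mu : e m u by case/andP: path_q.
have e_ml : e m (last v q) by rewrite parent_rel_sym.
have u_last : u = last v q.
  apply: val_inj; rewrite /= (below u) ?(below (last v q)) //.
    by rewrite inE mem_last orbT.
  by rewrite inE eqxx.
by move: uniq_q => /= /andP [_ /andP [+ _]]; rewrite u_last mem_last.
Qed.

Lemma parent_rel_tree : 0 < n -> is_tree (parent_rel n par).
Proof.
move=> n_gt0; split; first by rewrite card_ord.
- by split; [exact: parent_rel_sym | exact: parent_rel_irr].
- move=> x y; apply: connect_trans (connect_parent_root n_gt0 x) _.
  by rewrite (sym_connect_sym parent_rel_sym) connect_parent_root.
- exact: parent_rel_acyclic.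
Qed.
End ParentTree.

Section Domination.
Variables (V : finType) (e : rel V).

(* Closed neighbourhoods of the vertices of [s] lie in distinct classes of [lab],
   so each needs its own vertex of a dominating set. *)
Lemma packing_le_dominating (D : {set V}) (s : seq V) (lab : V -> nat) :
    dominating e D -> uniq (map lab s) ->
    (forall x, x \in s -> forall z, (z == x) || e x z -> lab z = lab x) ->
  size s <= #|D|.
Proof.
move=> /forallP domD uniq_lab lab_nbhd.
pose dom x := if x \in D then x else odflt x [pick u in D | e x u].
have domP x : (dom x \in D) && ((dom x == x) || e x (dom x)).
  rewrite /dom; case: ifP => [-> | xD]; first by rewrite eqxx.
  have := domD x; rewrite xD => /existsP [u /andP [uD e_xu]].
  case: pickP => [v /andP [-> ->] | /(_ u)]; first by rewrite orbT.
  by rewrite uD e_xu.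
have lab_dom : map lab (map dom s) = map lab s.
  rewrite -map_comp; apply/eq_in_map => x x_s /=.
  by case/andP: (domP x) => _; apply: lab_nbhd.
have uniq_dom : uniq (map dom s) by apply: (@map_uniq _ _ lab); rewrite lab_dom.
rewrite -(size_map dom) cardE; apply: uniq_leq_size => // y /mapP [x _ ->].
by rewrite mem_enum; case/andP: (domP x).
Qed.

Lemma domination_number_eq (g : nat) (D0 : {set V}) :
    dominating e D0 -> #|D0| <= g -> (forall D, dominating e D -> g <= #|D|) ->
  domination_number e = g.
Proof.
move=> domD0 D0_le g_le; apply/eqP; rewrite eqn_leq; apply/andP; split.
  apply: leq_trans D0_le; rewrite /domination_number.
  elim: (index_enum _) (mem_index_enum D0) => // D r IH.
  rewrite inE big_cons => /predU1P [<- | D0_r]; first by rewrite domD0 geq_minl.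
  by case: ifP => _; [apply: leq_trans (geq_minr _ _) (IH D0_r) | apply: IH].
apply: (big_ind (leq g)) => [|a b ga gb|D /g_le //]; last by rewrite leq_min ga gb.
exact: leq_trans (g_le _ domD0) (max_card _).
Qed.

Lemma num_min_dominating_ge (I : finType) (F : I -> {set V}) (g : nat) :
    injective F -> (forall i, dominating e (F i)) -> (forall i, #|F i| <= g) ->
    (forall D, dominating e D -> g <= #|D|) ->
  #|I| <= num_min_dominating e.
Proof.
move=> F_inj F_dom F_le g_le.
have [i0 _ | I0] := pickP I; last by rewrite (eq_card0 I0).
have gamma_g := domination_number_eq (F_dom i0) (F_le i0) g_le.
rewrite -cardsT -(card_imset _ F_inj); apply: subset_leq_card.
apply/subsetP => _ /imsetP [i _ ->].
by rewrite inE F_dom gamma_g eqn_leq F_le g_le.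
Qed.
End Domination.

Lemma card_ord_set_count m (P : pred nat) : #|[set x : 'I_m | P x]| = count P (iota 0 m).
Proof. by rewrite cardsE cardE /enum_mem -enumT /= size_filter -val_enum_ord count_map. Qed.

Ltac split_ifs_lia :=
  repeat (match goal with
   | |- context [if ?b then _ else _] =>
       lazymatch b with context [if _ then _ else _] => fail | _ => destruct b eqn:? end
   end);
  repeat (match goal with
   | |- is_true (_ || _) -> _ => case/orP
   | |- is_true (_ && _) -> _ => case/andP
   | |- _ -> _ => intro
   end); lia.

(* Vertex 0 is the root, with pendant leaves 1 and 2.  For j < k the vertices
   3 + 5j + i (i < 5) form a path hanging from the root at i = 0.  If t, the
   vertices 3 + 5k + i (i < 7) form a spider with centre i = 2 and legs 2-1-0,
   2-3-5, 2-4-6, hanging from the root at i = 0. *)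
Section Bouquet.
Variables (k : nat) (t : bool).

Definition bouquet_size := 3 + 5 * k + 7 * t.

Definition bouquet_parent (v : nat) : nat :=
  if v < 3 then 0
  else if v < 3 + 5 * k then (if (v - 3) %% 5 == 0 then 0 else v - 1)
  else if v == 3 + 5 * k then 0
  else if v < 3 + 5 * k + 4 then v - 1 else v - 2.

Lemma bouquet_parent_lt v : 0 < v -> bouquet_parent v < v.
Proof. rewrite /bouquet_parent; split_ifs_lia. Qed.

Definition spider_parent (i : nat) : nat := if i < 4 then i.-1 else i - 2.

Lemma bouquet_edge_path j i i' : j < k -> i < 5 -> i' < 5 -> parent_edge predn i i' ->
  parent_edge bouquet_parent (3 + 5 * j + i) (3 + 5 * j + i').
Proof. rewrite /parent_edge /bouquet_parent; split_ifs_lia. Qed.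

Lemma bouquet_edge_spider i i' : i < 7 -> i' < 7 -> parent_edge spider_parent i i' ->
  parent_edge bouquet_parent (3 + 5 * k + i) (3 + 5 * k + i').
Proof. rewrite /parent_edge /spider_parent /bouquet_parent; split_ifs_lia. Qed.

Lemma bouquet_edge_root v : 0 < v ->
    [|| v < 3, (3 <= v < 3 + 5 * k) && ((v - 3) %% 5 == 0) | v == 3 + 5 * k] ->
  parent_edge bouquet_parent v 0.
Proof. rewrite /parent_edge /bouquet_parent; split_ifs_lia. Qed.

Lemma bouquet_vertexP v : v < bouquet_size ->
  [\/ v < 3, exists2 j, j < k & exists2 i, i < 5 & v = 3 + 5 * j + i
    | t /\ exists2 i, i < 7 & v = 3 + 5 * k + i].
Proof.
rewrite /bouquet_size => v_lt.
have [|v_ge3] := ltnP v 3; first by constructor 1.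
have [v_lt' | v_ge] := ltnP v (3 + 5 * k).
  by constructor 2; exists ((v - 3) %/ 5); last exists ((v - 3) %% 5); lia.
constructor 3; case: t v_lt => /= v_lt; last lia.
by split => //; exists (v - 3 - 5 * k); lia.
Qed.

(* The packing: the leaf 1, vertices 1 and 4 of each path and vertices 1, 5, 6 of
   the spider; [packing_vertex c] is the one whose closed neighbourhood gets label c. *)
Definition packing_label (v : nat) : nat :=
  if v < 3 then 0
  else if v < 3 + 5 * k then 1 + 2 * ((v - 3) %/ 5) + ((v - 3) %% 5 >= 3)
  else if v < 3 + 5 * k + 3 then 1 + 2 * k
  else if odd (v - 3 - 5 * k) then 2 + 2 * k else 3 + 2 * k.

Definition packing_vertex (c : nat) : nat :=
  if c == 0 then 1
  else if c <= 2 * k then 3 + 5 * ((c - 1) %/ 2) + (if odd (c - 1) then 4 else 1)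
  else 3 + 5 * k + (if c == 2 * k + 1 then 1 else if c == 2 * k + 2 then 5 else 6).

Lemma packing_vertex_lt c : c < 1 + 2 * k + 3 * t -> packing_vertex c < bouquet_size.
Proof. rewrite /bouquet_size /packing_vertex; case: t; split_ifs_lia. Qed.

Lemma packing_label_vertex c : c < 1 + 2 * k + 3 * t -> packing_label (packing_vertex c) = c.
Proof. rewrite /packing_label /packing_vertex; case: t; split_ifs_lia. Qed.

Lemma packing_nbhd_leaf z : z < bouquet_size ->
  (z == 1) || parent_edge bouquet_parent 1 z -> packing_label z = 0.
Proof. rewrite /bouquet_size /packing_label /parent_edge /bouquet_parent; split_ifs_lia. Qed.

Lemma packing_nbhd_path j i z : j < k -> i \in [:: 1; 4] -> z < bouquet_size ->
    (z == 3 + 5 * j + i) || parent_edge bouquet_parent (3 + 5 * j + i) z ->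
  packing_label z = 1 + 2 * j + (i == 4).
Proof.
move=> j_lt; rewrite !inE => /orP [] /eqP -> /=;
  rewrite /bouquet_size /packing_label /parent_edge /bouquet_parent; split_ifs_lia.
Qed.

Lemma packing_nbhd_spider i z : t -> i \in [:: 1; 5; 6] -> z < bouquet_size ->
    (z == 3 + 5 * k + i) || parent_edge bouquet_parent (3 + 5 * k + i) z ->
  packing_label z = 1 + 2 * k + (4 < i) + (i == 6).
Proof.
rewrite /bouquet_size !inE => -> /or3P [] /eqP -> /=;
  rewrite /packing_label /parent_edge /bouquet_parent; split_ifs_lia.
Qed.

Lemma packing_label_nbhd c z : c < 1 + 2 * k + 3 * t -> z < bouquet_size ->
    (z == packing_vertex c) || parent_edge bouquet_parent (packing_vertex c) z ->
  packing_label z = c.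
Proof.
move=> c_lt z_lt; rewrite /packing_vertex.
case: ifP => [/eqP -> | c_gt0]; first exact: packing_nbhd_leaf.
case: ifP => c_le.
  have j_lt : (c - 1) %/ 2 < k by lia.
  have i_in : (if odd (c - 1) then 4 else 1) \in [:: 1; 4] by case: odd.
  by move/(packing_nbhd_path j_lt i_in z_lt) => ->; split_ifs_lia.
have t_true : t by move: c_lt; case: (t) => //=; lia.
have i_in : (if c == 2 * k + 1 then 1 else if c == 2 * k + 2 then 5 else 6) \in [:: 1; 5; 6].
  by case: ifP => //; case: ifP.
by move/(packing_nbhd_spider t_true i_in z_lt) => ->; split_ifs_lia.
Qed.
End Bouquet.

(* The patterns are the 2-subsets of the path 0-1-2-3-4, and 3-subsets of the
   spider, that dominate every vertex except possibly 0. *)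
Definition path_patterns : seq (seq nat) :=
  [:: [:: 1; 3]; [:: 1; 4]; [:: 2; 3]; [:: 2; 4]; [:: 0; 3]].

Definition spider_patterns : seq (seq nat) :=
  [:: [:: 0; 3; 4]; [:: 0; 3; 6]; [:: 0; 4; 5]; [:: 1; 3; 4]; [:: 1; 3; 6]; [:: 1; 4; 5];
      [:: 1; 5; 6]; [:: 2; 3; 4]; [:: 2; 3; 6]; [:: 2; 4; 5]; [:: 2; 5; 6]].

Definition in_path_pattern (c i : nat) : bool := i \in nth [::] path_patterns c.
Definition in_spider_pattern (c i : nat) : bool := i \in nth [::] spider_patterns c.

Lemma path_pattern_dominates c i : c < 5 -> i < 5 ->
  [|| in_path_pattern c i, i == 0
    | has (fun i' => parent_edge predn i i' && in_path_pattern c i') (iota 0 5)].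
Proof. by case: c => [|[|[|[|[|c]]]]]; case: i => [|[|[|[|[|i]]]]]. Qed.

Lemma spider_pattern_dominates c i : c < 11 -> i < 7 ->
  [|| in_spider_pattern c i, i == 0
    | has (fun i' => parent_edge spider_parent i i' && in_spider_pattern c i') (iota 0 7)].
Proof.
by case: c => [|[|[|[|[|[|[|[|[|[|[|c]]]]]]]]]]]; case: i => [|[|[|[|[|[|[|i]]]]]]].
Qed.

Lemma count_path_pattern c : c < 5 -> count (in_path_pattern c) (iota 0 5) = 2.
Proof. by case: c => [|[|[|[|[|c]]]]]. Qed.

Lemma count_spider_pattern c : c < 11 -> count (in_spider_pattern c) (iota 0 7) = 3.
Proof. by case: c => [|[|[|[|[|[|[|[|[|[|[|c]]]]]]]]]]]. Qed.

Lemma path_pattern_inj c c' : c < 5 -> c' < 5 ->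
  (forall i, i < 5 -> in_path_pattern c i = in_path_pattern c' i) -> c = c'.
Proof.
move=> c_lt c'_lt eq_c.
move: (eq_c 0 isT) (eq_c 1 isT) (eq_c 2 isT) (eq_c 3 isT); clear eq_c.
by case: c c_lt => [|[|[|[|[|c]]]]]; case: c' c'_lt => [|[|[|[|[|c']]]]].
Qed.

Lemma spider_pattern_inj c c' : c < 11 -> c' < 11 ->
  (forall i, i < 7 -> in_spider_pattern c i = in_spider_pattern c' i) -> c = c'.
Proof.
move=> c_lt c'_lt eq_c.
move: (eq_c 0 isT) (eq_c 1 isT) (eq_c 2 isT) (eq_c 3 isT) (eq_c 4 isT) (eq_c 5 isT)
  (eq_c 6 isT); clear eq_c.
by case: c c_lt => [|[|[|[|[|[|[|[|[|[|[|c]]]]]]]]]]];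
  case: c' c'_lt => [|[|[|[|[|[|[|[|[|[|[|c']]]]]]]]]]].
Qed.

Section PatternSet.
Variables (k : nat) (t : bool) (cs : nat -> nat) (g : nat).

Local Notation n := (bouquet_size k t).
Local Notation e := (parent_rel n (bouquet_parent k)).

Definition in_pattern_set (v : nat) : bool :=
  if v < 3 then v == 0
  else if v < 3 + 5 * k then in_path_pattern (cs ((v - 3) %/ 5)) ((v - 3) %% 5)
  else in_spider_pattern g (v - 3 - 5 * k).

Definition pattern_set : {set 'I_n} := [set x : 'I_n | in_pattern_set x].

Lemma in_pattern_set_path j i : j < k -> i < 5 ->
  in_pattern_set (3 + 5 * j + i) = in_path_pattern (cs j) i.
Proof.
move=> j_lt i_lt; rewrite /in_pattern_set.
rewrite (_ : _ < 3 = false) 1?(_ : _ < 3 + 5 * k = true); try lia.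
have -> : (3 + 5 * j + i - 3) %/ 5 = j by lia.
by have -> : (3 + 5 * j + i - 3) %% 5 = i by lia.
Qed.

Lemma in_pattern_set_spider i : in_pattern_set (3 + 5 * k + i) = in_spider_pattern g i.
Proof.
rewrite /in_pattern_set (_ : _ < 3 = false) 1?(_ : _ < 3 + 5 * k = false); try lia.
by have -> : 3 + 5 * k + i - 3 - 5 * k = i by lia.
Qed.

Hypotheses (cs_lt : forall j, cs j < 5) (g_lt : g < 11).

Lemma pattern_set_dominating : dominating e pattern_set.
Proof.
have n_gt0 : 0 < n by rewrite /bouquet_size; lia.
apply/forallP => x; rewrite inE.
have dominated u (u_lt : u < n) : in_pattern_set u -> parent_edge (bouquet_parent k) x u ->
    [exists u0 in pattern_set, e x u0].
  by move=> u_in e_xu; apply/existsP; exists (Ordinal u_lt); rewrite inE u_in.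
have by_root := dominated 0 n_gt0 isT.
case: (bouquet_vertexP (ltn_ord x)) => [x_lt3 | [j j_lt [i i_lt x_ji]] | [t_true [i i_lt x_i]]].
- have [x0 | x_gt0] := posnP x; first by rewrite /in_pattern_set x_lt3 x0.
  by rewrite by_root ?orbT // bouquet_edge_root // x_lt3.
- rewrite x_ji in_pattern_set_path //.
  case/or3P: (path_pattern_dominates (cs_lt j) i_lt) => [-> // | /eqP i0 | ].
    by rewrite by_root ?orbT // x_ji i0 bouquet_edge_root //; lia.
  case/hasP => i'; rewrite mem_iota => /andP [_ i'_lt] /andP [e_ii' i'_in].
  have u_lt : 3 + 5 * j + i' < n by rewrite /bouquet_size; lia.
  rewrite (dominated _ u_lt) ?orbT ?in_pattern_set_path // x_ji.
  exact: bouquet_edge_path.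
- rewrite x_i in_pattern_set_spider.
  case/or3P: (spider_pattern_dominates g_lt i_lt) => [-> // | /eqP i0 | ].
    by rewrite by_root ?orbT // x_i i0 bouquet_edge_root //; lia.
  case/hasP => i'; rewrite mem_iota => /andP [_ i'_lt] /andP [e_ii' i'_in].
  have u_lt : 3 + 5 * k + i' < n by rewrite /bouquet_size t_true; lia.
  rewrite (dominated _ u_lt) ?orbT ?in_pattern_set_spider // x_i.
  exact: bouquet_edge_spider.
Qed.

Lemma count_pattern_set_paths m : m <= k -> count in_pattern_set (iota 3 (5 * m)) = 2 * m.
Proof.
elim: m => [|m IH] m_le //.
rewrite mulnSr iotaD count_cat IH 1?ltnW // -[3 + 5 * m]addn0 iotaDl count_map.
rewrite (@eq_in_count _ _ (in_path_pattern (cs m))) ?count_path_pattern //; first lia.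
by move=> i; rewrite mem_iota => /andP [_ i_lt]; apply: in_pattern_set_path.
Qed.

Lemma card_pattern_set : #|pattern_set| = 1 + 2 * k + 3 * t.
Proof.
rewrite card_ord_set_count /bouquet_size -addnA iotaD count_cat iotaD count_cat.
have -> : iota (0 + 3 + 5 * k) (7 * t) = map (addn (3 + 5 * k)) (iota 0 (7 * t)).
  by rewrite -iotaDl addn0 add0n.
rewrite count_pattern_set_paths // count_map (_ : count _ (iota 0 3) = 1) //.
rewrite (@eq_in_count _ _ (in_spider_pattern g)) => [|i _]; last first.
  by rewrite /= in_pattern_set_spider.
by case: (t); rewrite ?muln1 ?muln0 ?count_spider_pattern //=; lia.
Qed.
End PatternSet.

Definition ord_nth (m p : nat) (s : m.-tuple 'I_p) (j : nat) : nat := nth 0 (map val s) j.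

Lemma ord_nth_lt (m p : nat) (s : m.-tuple 'I_p.+1) j : ord_nth s j < p.+1.
Proof.
rewrite /ord_nth; have [j_lt | j_ge] := ltnP j m.
  by rewrite (nth_map ord0) ?size_tuple ?ltn_ord.
by rewrite nth_default // size_map size_tuple.
Qed.

Lemma ord_nth_inj (m p : nat) (s s' : m.-tuple 'I_p.+1) :
  (forall j, j < m -> ord_nth s j = ord_nth s' j) -> s = s'.
Proof.
move=> eq_s; apply: eq_from_tnth => j; apply: val_inj.
move: (eq_s j (ltn_ord j)); rewrite /ord_nth.
by rewrite !(nth_map ord0) ?size_tuple // -!tnth_nth.
Qed.

Section BouquetDomination.
Variables (k : nat) (t : bool).

Local Notation n := (bouquet_size k t).
Local Notation e := (parent_rel n (bouquet_parent k)).

Lemma bouquet_dominating_ge (D : {set 'I_n}) : dominating e D -> 1 + 2 * k + 3 * t <= #|D|.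
Proof.
move=> domD; have n_gt0 : 0 < n by rewrite /bouquet_size; lia.
pose vertex c : 'I_n := insubd (Ordinal n_gt0) (packing_vertex k c).
have vertexE c : c < 1 + 2 * k + 3 * t -> vertex c = packing_vertex k c :> nat.
  by move=> c_lt; rewrite val_insubd packing_vertex_lt.
rewrite -[X in X <= _](size_iota 0) -(size_map vertex).
apply: (packing_le_dominating (lab := fun x : 'I_n => packing_label k x) domD).
  rewrite -map_comp; apply: etrans (iota_uniq 0 (1 + 2 * k + 3 * t)); congr uniq.
  rewrite -[RHS]map_id; apply/eq_in_map => c; rewrite mem_iota /= => c_lt.
  by rewrite vertexE // (packing_label_vertex c_lt).
move=> x /mapP [c]; rewrite mem_iota /= => c_lt -> z z_nbhd.
rewrite vertexE // (packing_label_vertex c_lt) (packing_label_nbhd c_lt (ltn_ord z)) //.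
by rewrite -vertexE.
Qed.

(* A spider pattern is chosen only when t holds, hence from a t-tuple. *)
Definition bouquet_pattern_set (a : k.-tuple 'I_5 * t.-tuple 'I_11) : {set 'I_n} :=
  pattern_set k t (ord_nth a.1) (ord_nth a.2 0).

Lemma bouquet_pattern_set_inj : injective bouquet_pattern_set.
Proof.
move=> [cs gs] [cs' gs'] /= eq_set.
have eq_in v : v < n -> in_pattern_set k (ord_nth cs) (ord_nth gs 0) v =
                        in_pattern_set k (ord_nth cs') (ord_nth gs' 0) v.
  move=> v_lt; have := congr1 (fun S : {set 'I_n} => Ordinal v_lt \in S) eq_set.
  by rewrite /= /bouquet_pattern_set /pattern_set !inE.
congr pair; apply: ord_nth_inj => j j_lt.
  apply: path_pattern_inj (ord_nth_lt _ _) (ord_nth_lt _ _) _ => i i_lt.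
  rewrite -(in_pattern_set_path (ord_nth cs) (ord_nth gs 0) j_lt i_lt).
  rewrite -(in_pattern_set_path (ord_nth cs') (ord_nth gs' 0) j_lt i_lt).
  by apply: eq_in; rewrite /bouquet_size; lia.
have [j0 t_true] : j = 0 /\ t by case: (t) j_lt; case: j.
rewrite j0; apply: spider_pattern_inj (ord_nth_lt _ _) (ord_nth_lt _ _) _ => i i_lt.
rewrite -(in_pattern_set_spider k (ord_nth cs)) -(in_pattern_set_spider k (ord_nth cs')).
by apply: eq_in; rewrite /bouquet_size t_true; lia.
Qed.
End BouquetDomination.

Definition path4_patterns : seq (seq nat) := [:: [:: 0; 2]; [:: 1; 2]; [:: 1; 3]].

Definition path4_set (c : 'I_3) : {set 'I_4} :=
  [set x : 'I_4 | val x \in nth [::] path4_patterns c].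

Local Notation path4 := (parent_rel 4 predn).

Lemma path4_set_dominating c : dominating path4 (path4_set c).
Proof.
apply/forallP => x; rewrite inE; apply/orP.
case: c => [[|[|[|c]]] c_lt] //; case: x => [[|[|[|[|x]]]] x_lt] //; try by left.
all: right; apply/existsP.
all: first [ by exists (Ordinal (isT : 0 < 4)); rewrite !inE
           | by exists (Ordinal (isT : 1 < 4)); rewrite !inE
           | by exists (Ordinal (isT : 2 < 4)); rewrite !inE
           | by exists (Ordinal (isT : 3 < 4)); rewrite !inE ].
Qed.

Lemma card_path4_set c : #|path4_set c| = 2.
Proof. by rewrite card_ord_set_count; case: c => [[|[|[|c]]] c_lt]. Qed.

Lemma path4_set_inj : injective path4_set.
Proof.
move=> c c' eq_set.
have := congr1 (fun S : {set 'I_4} =>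
  (Ordinal (isT : 0 < 4) \in S, Ordinal (isT : 2 < 4) \in S)) eq_set.
rewrite /= !inE {eq_set}; apply: contra_eq => neq_c.
by case: c c' neq_c => [[|[|[|c]]] c_lt] [[|[|[|c']]] c'_lt].
Qed.

Lemma path4_dominating_ge (D : {set 'I_4}) : dominating path4 D -> 2 <= #|D|.
Proof.
move=> domD.
apply: (@packing_le_dominating _ _ D [:: ord0; ord_max] (fun x => x %/ 2) domD) => //.
by move=> x; rewrite !inE => /orP [] /eqP -> [[|[|[|[|z]]]] z_lt].
Qed.

Lemma path4_spec :
  exists n (e : rel 'I_n), [/\ is_tree e, domination_number e = 2 & 3 <= num_min_dominating e].
Proof.
exists 4, path4; split.
- by apply: parent_rel_tree => // v; case: v.
- apply: (domination_number_eq (path4_set_dominating ord0)); first by rewrite card_path4_set.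
  exact: path4_dominating_ge.
- have := num_min_dominating_ge path4_set_inj path4_set_dominating _ path4_dominating_ge.
  by rewrite card_ord; apply=> c; rewrite card_path4_set.
Qed.

Lemma bouquet_spec k (t : bool) :
  exists n (e : rel 'I_n), [/\ is_tree e, domination_number e = 1 + 2 * k + 3 * t
                             & expn 5 k * expn 11 t <= num_min_dominating e].
Proof.
have n_gt0 : 0 < bouquet_size k t by rewrite /bouquet_size; lia.
have set_dominating (a : k.-tuple 'I_5 * t.-tuple 'I_11) :=
  pattern_set_dominating k t (ord_nth_lt a.1) (ord_nth_lt a.2 0).
have card_set (a : k.-tuple 'I_5 * t.-tuple 'I_11) :=
  card_pattern_set k t (ord_nth_lt a.1) (ord_nth_lt a.2 0).
exists (bouquet_size k t), (parent_rel _ (bouquet_parent k)); split.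
- exact: parent_rel_tree (@bouquet_parent_lt k) n_gt0.
- apply: (domination_number_eq (set_dominating (nseq_tuple _ ord0, nseq_tuple _ ord0))).
    by rewrite card_set.
  exact: bouquet_dominating_ge.
- have := num_min_dominating_ge (@bouquet_pattern_set_inj k t) set_dominating _
    (@bouquet_dominating_ge k t).
  by rewrite card_prod !card_tuple !card_ord; apply=> a; rewrite card_set.
Qed.

Lemma INR_expn (m k : nat) : (INR (expn m k) = INR m ^ k)%R.
Proof. by elim: k => [|k IH] //; rewrite expnS -multE mult_INR IH. Qed.

Lemma sqrt5_pow_double (k : nat) : (sqrt 5 ^ (2 * k) = INR (expn 5 k))%R.
Proof.
rewrite INR_expn -multE pow_mult /= Rmult_1_r sqrt_sqrt; last by lra.
by congr pow; simpl; ring.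
Qed.

Lemma sqrt5_lt : (sqrt 5 < 5 / 2)%R.
Proof.
have := sqrt_pos 5; have : (sqrt 5 * sqrt 5 = 5)%R by apply: sqrt_sqrt; lra.
nra.
Qed.

Lemma bouquet_bound k (t : bool) :
  (2 / 5 * sqrt 5 ^ (1 + 2 * k + 3 * t) < INR (expn 5 k * expn 11 t))%R.
Proof.
have := sqrt5_lt; have : (0 < INR (expn 5 k))%R by apply/lt_0_INR/ltP; rewrite expn_gt0.
case: t; rewrite ?muln1 ?muln0 ?addn0.
  rewrite (_ : 1 + 2 * k + 3 = 2 * (k + 2)) ?sqrt5_pow_double; last by lia.
  by rewrite expnD -!multE !mult_INR /=; nra.
by rewrite addnC pow_add sqrt5_pow_double pow_1; nra.
Qed.

Lemma path4_bound : (2 / 5 * sqrt 5 ^ 2 < INR 3)%R.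
Proof. by rewrite /= Rmult_1_r sqrt_sqrt /=; lra. Qed.

Lemma tree_with_many_min_dominating g m : (2 / 5 * sqrt 5 ^ g < INR m)%R ->
    (exists n (e : rel 'I_n),
       [/\ is_tree e, domination_number e = g & m <= num_min_dominating e]) ->
  exists n (e : rel 'I_n), is_tree e /\ domination_number e = g /\
    (2 / 5 * sqrt 5 ^ g < INR (num_min_dominating e))%R.
Proof.
move=> lt_m [n [e [tree_e gamma_e /leP /le_INR le_m]]].
by exists n, e; split=> //; split=> //; lra.
Qed.

Theorem mainTheorem3 :
  forall g : nat, 0 < g ->
  exists (n : nat) (e : rel 'I_n),
    is_tree e /\ domination_number e = g /\
    (2 / 5 * sqrt 5 ^ g < INR (num_min_dominating e))%R.
Proof.
move=> g g_gt0; have [-> | g_ne2] := eqVneq g 2.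
  exact: tree_with_many_min_dominating path4_bound path4_spec.
have [k [t ->]] : exists k (t : bool), g = 1 + 2 * k + 3 * t.
  by case/boolP: (odd g) => g_odd; [exists ((g - 1) %/ 2), false | exists ((g - 4) %/ 2), true];
    lia.
exact: tree_with_many_min_dominating (bouquet_bound k t) (bouquet_spec k t).
Qed.
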